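(* For all $i\ge1$, $$\frac{\lambda_{i+1}}{\lambda_i}\in\left[t'(\phi_i),\,t'(\phi_{i-1})\right].$$
   Context: Let $D=\{c_j\}_{j=0}^d$ be an offspring distribution of a Galton–Watson branching process on an infinite $d$-ary tree, with each non-root node independently holding an answer with probability $1/n$. Let $t(x)=\sum_{j=0}^d c_j x^j(1-\frac1n)^j$, $\phi_0=1$, $\phi_i=t(\phi_{i-1})$ for $i\ge1$ (the probability that no active node in the first $i$ levels holds an answer), and $\lambda_i=\phi_{i-1}-\phi_i$ for $i\ge1$ (the probability that the first answer is at level $i$). *)

From mathcomp Require Import all_boot all_order all_algebra.
Set Implicit Arguments. Unset Strict Implicit. Unset Printing Implicit Defensive.
Import Order.TTheory GRing.Theory Num.Theory.
Local Open Scope ring_scope.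

(* Offspring distribution D = (c_j)_{j=0..d}, answer probability 1/n.
   t(x) = \sum_{j=0}^d c_j x^j (1 - 1/n)^j, as a polynomial in x;
   t'  is its derivative (formal derivative = real derivative of a polynomial). *)
Definition tpoly (R : realFieldType) (d : nat) (c : nat -> R) (n : nat) : {poly R} :=
  \sum_(j < d.+1) (c j * (1 - (n%:R)^-1) ^+ j) *: 'X^j.

Definition phi (R : realFieldType) (d : nat) (c : nat -> R) (n : nat) (i : nat) : R :=
  iter i (fun x => (tpoly d c n).[x]) 1.

Definition lambda (R : realFieldType) (d : nat) (c : nat -> R) (n : nat) (i : nat) : R :=
  phi d c n i.-1 - phi d c n i.

From mathcomp Require Import all_boot all_order all_algebra.
Import Order.TTheory GRing.Theory Num.Theory.
Local Open Scope ring_scope.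
Set Implicit Arguments. Unset Strict Implicit.

(* A polynomial with nonnegative coefficients is convex and nondecreasing on
   [0, oo), which gives the secant bounds (y - x) t'(x) <= t(y) - t(x) <= (y - x) t'(y)
   for 0 <= x <= y.  The iterates phi_i decrease in [0, 1], and
   lambda_(i+1) = t(phi_(i-1)) - t(phi_i), so these bounds with x = phi_i,
   y = phi_(i-1) bound lambda_(i+1) by lambda_i t'(phi_i) and lambda_i t'(phi_(i-1)).
   If lambda_i = 0 the quotient is 0 (x / 0 = 0), and then t'(phi_i) = 0 must be
   shown: otherwise the lower bound propagates lambda_1 = 1 - t(1) > 0 up to
   lambda_i, and 1 - t(1) >= t'(1) / n > 0. *)

Lemma subrXX_secant (R : realDomainType) (x y : R) (j : nat) : 0 <= x -> x <= y ->
  (y - x) * (x ^+ j.-1 *+ j) <= y ^+ j - x ^+ j <= (y - x) * (y ^+ j.-1 *+ j).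
Proof.
move=> x0 xy; have y0 := le_trans x0 xy.
have sumE (z : R) : z ^+ j.-1 *+ j = \sum_(i < j) z ^+ (j.-1 - i) * z ^+ i.
  transitivity (\sum_(i < j) z ^+ j.-1); first by rewrite sumr_const card_ord.
  apply: eq_bigr => i _.
  have ij : (i <= j.-1)%N by rewrite -ltnS prednK // (leq_ltn_trans _ (ltn_ord i)).
  by rewrite -exprD subnK.
rewrite subrXX !sumE.
apply/andP; split; apply: ler_wpM2l; rewrite ?subr_ge0 //; apply: ler_sum => i _.
- by rewrite ler_wpM2r ?exprn_ge0 // lerXn2r.
- by rewrite ler_wpM2l ?exprn_ge0 // lerXn2r.
Qed.

Section NonnegCoefficients.
Variable R : realFieldType.
Implicit Types (p : {poly R}) (x y : R).

Lemma horner_nneg_ge0 p x : p \is a polyOver Num.nneg -> 0 <= x -> 0 <= p.[x].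
Proof.
move=> /polyOverP p0 x0; rewrite horner_coef; apply: sumr_ge0 => i _.
by rewrite mulr_ge0 ?exprn_ge0 // -nnegrE.
Qed.

Lemma horner_deriv_coef p x :
  p^`().[x] = \sum_(i < size p) p`_i * (x ^+ i.-1 *+ i).
Proof.
rewrite -{1}[p]coefK poly_def raddf_sum horner_sum; apply: eq_bigr => i _.
by rewrite /= derivZ derivXn hornerZ hornerMn hornerXn.
Qed.

Lemma horner_nneg_secant p x y : p \is a polyOver Num.nneg -> 0 <= x -> x <= y ->
  (y - x) * p^`().[x] <= p.[y] - p.[x] <= (y - x) * p^`().[y].
Proof.
move=> /polyOverP p0 x0 xy.
rewrite !horner_deriv_coef !horner_coef -sumrB !mulr_sumr.
apply/andP; split; apply: ler_sum => i _; rewrite -mulrBr mulrCA;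
  by apply: ler_wpM2l; [rewrite -nnegrE | have /andP[] := subrXX_secant i x0 xy].
Qed.

Lemma horner_nneg_le p x y : p \is a polyOver Num.nneg -> 0 <= x -> x <= y ->
  p.[x] <= p.[y].
Proof.
move=> p0 x0 xy; rewrite -subr_ge0.
have /andP[+ _] := horner_nneg_secant p0 x0 xy; apply: le_trans.
by rewrite mulr_ge0 ?subr_ge0 ?horner_nneg_ge0 ?polyOver_deriv.
Qed.

End NonnegCoefficients.

Section IterateFromOne.
Variables (R : realFieldType) (p : {poly R}).
Hypothesis p_nneg : p \is a polyOver Num.nneg.
Hypothesis p1_le1 : p.[1] <= 1.
Hypothesis p1_lt1 : 0 < p^`().[1] -> p.[1] < 1.

Let x k := iter k (fun z => p.[z]) 1.

Lemma iter_horner_bounds k : [&& 0 <= x k.+1, x k.+1 <= x k & x k <= 1].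
Proof.
elim: k => [|k /and3P[x0 xk x1]].
  by rewrite /= p1_le1 lexx horner_nneg_ge0 ?ler01.
by rewrite /= horner_nneg_ge0 ?horner_nneg_le // (le_trans xk x1).
Qed.

Lemma iter_horner_ge0 k : 0 <= x k.
Proof. by case: k => [|k]; [rewrite ler01 | case/and3P: (iter_horner_bounds k)]. Qed.

Lemma iter_horner_le k m : (k <= m)%N -> x m <= x k.
Proof.
elim: m => [|m IH]; first by rewrite leqn0 => /eqP ->.
rewrite leq_eqVlt => /orP[/eqP -> //|]; rewrite ltnS => /IH.
by apply: le_trans; case/and3P: (iter_horner_bounds m).
Qed.

Lemma iter_gap_secant k :
  (x k - x k.+1) * p^`().[x k.+1] <= x k.+1 - x k.+2
  <= (x k - x k.+1) * p^`().[x k].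
Proof.
by case/and3P: (iter_horner_bounds k) => x0 xk _; apply: horner_nneg_secant.
Qed.

Lemma iter_gap_gt0 i : 0 < p^`().[x i] -> forall k, (k <= i)%N -> 0 < x k - x k.+1.
Proof.
move=> Dxi; have Dpos k : (k <= i)%N -> 0 < p^`().[x k].
  move=> ki; apply: lt_le_trans Dxi _.
  by rewrite horner_nneg_le ?polyOver_deriv ?iter_horner_ge0 ?iter_horner_le.
elim=> [|k IH] ki.
  by rewrite subr_gt0 p1_lt1 // (Dpos 0%N).
have /andP[+ _] := iter_gap_secant k; apply: lt_le_trans.
by rewrite mulr_gt0 ?IH ?Dpos // ltnW.
Qed.

Lemma iter_gap_ratio i :
  p^`().[x i.+1] <= (x i.+1 - x i.+2) / (x i - x i.+1) <= p^`().[x i].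
Proof.
have [g0|gn0] := eqVneq (x i - x i.+1) 0.
  rewrite g0 invr0 mulr0 horner_nneg_ge0 ?polyOver_deriv ?iter_horner_ge0 //.
  rewrite andbT leNgt; apply/negP => /iter_gap_gt0 /(_ i (leqnSn i)).
  by rewrite g0 ltxx.
have gpos : 0 < x i - x i.+1.
  by rewrite lt_neqAle eq_sym gn0 subr_ge0; case/and3P: (iter_horner_bounds i).
have /andP[lo up] := iter_gap_secant i.
by rewrite ler_pdivlMr // ler_pdivrMr // mulrC lo mulrC up.
Qed.

End IterateFromOne.

Lemma invn_le1 (R : numFieldType) (n : nat) : (0 < n)%N -> n%:R^-1 <= 1 :> R.
Proof. by move=> n0; rewrite invr_le1 ?unitf_gt0 ?ltr0n ?ler1n. Qed.

Definition offspring_gf (R : realFieldType) (d : nat) (c : nat -> R) : {poly R} :=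
  \poly_(j < d.+1) c j.

Lemma tpolyE (R : realFieldType) (d : nat) (c : nat -> R) (n : nat) :
  tpoly d c n = offspring_gf d c \Po ((1 - n%:R^-1) *: 'X).
Proof.
rewrite /offspring_gf poly_def -[RHS]/(comp_poly _ _) raddf_sum; apply: eq_bigr => j _.
by rewrite /= comp_polyZ comp_Xn_poly exprZn scalerA.
Qed.

Section OffspringGf.
Variables (R : realFieldType) (d : nat) (c : nat -> R) (n : nat).
Hypothesis hc0 : forall j, (j <= d)%N -> 0 <= c j.
Hypothesis hc1 : \sum_(j < d.+1) c j = 1.
Hypothesis hn : (0 < n)%N.

Lemma offspring_gf_nneg : offspring_gf d c \is a polyOver Num.nneg.
Proof. by apply: polyOver_poly => j jd; rewrite nnegrE hc0. Qed.

Lemma tpoly_nneg : tpoly d c n \is a polyOver Num.nneg.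
Proof.
rewrite tpolyE polyOver_comp ?offspring_gf_nneg //.
by rewrite polyOverZ ?polyOverX // nnegrE subr_ge0 invn_le1.
Qed.

(* With q = 1 - 1/n and s the offspring generating function,
   1 - t(1) = s(1) - s(q) >= (1 - q) s'(q) >= (1 - q) q s'(q) = t'(1) / n. *)
Lemma tpoly_deficit : (tpoly d c n)^`().[1] / n%:R <= 1 - (tpoly d c n).[1].
Proof.
set q : R := 1 - n%:R^-1; set s := offspring_gf d c.
have q0 : 0 <= q by rewrite subr_ge0 invn_le1.
have q1 : q <= 1 by rewrite lerBlDr lerDl invr_ge0 ler0n.
have s1 : s.[1] = 1.
  rewrite /s /offspring_gf poly_def horner_sum -[RHS]hc1.
  by apply: eq_bigr => j _; rewrite hornerZ hornerXn expr1n mulr1.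
have /andP[+ _] := horner_nneg_secant offspring_gf_nneg q0 q1.
have -> : 1 - q = n%:R^-1 by rewrite opprB addrC subrK.
rewrite s1 tpolyE deriv_comp hornerM !horner_comp derivZ derivX.
rewrite !hornerZ hornerX hornerC !mulr1 -/s -/q; apply: le_trans.
rewrite [leRHS]mulrC ler_wpM2r ?invr_ge0 ?ler0n // ler_piMr //.
by rewrite horner_nneg_ge0 ?polyOver_deriv ?offspring_gf_nneg.
Qed.

Lemma tpoly1_le1 : (tpoly d c n).[1] <= 1.
Proof.
rewrite -subr_ge0; apply: le_trans tpoly_deficit.
by rewrite divr_ge0 ?ler0n ?horner_nneg_ge0 ?polyOver_deriv ?tpoly_nneg.
Qed.

Lemma tpoly1_lt1 : 0 < (tpoly d c n)^`().[1] -> (tpoly d c n).[1] < 1.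
Proof.
by move=> D1; rewrite -subr_gt0; apply: lt_le_trans tpoly_deficit; rewrite divr_gt0 ?ltr0n.
Qed.

End OffspringGf.

Theorem proposition3p2 (R : realFieldType) (d : nat) (c : nat -> R) (n : nat)
  (hc0 : forall j, (j <= d)%N -> 0 <= c j)
  (hc1 : \sum_(j < d.+1) c j = 1)
  (hn : (0 < n)%N) :
  forall i : nat, (1 <= i)%N ->
    (tpoly d c n)^`().[phi d c n i] <= lambda d c n i.+1 / lambda d c n i
    <= (tpoly d c n)^`().[phi d c n i.-1].
Proof.
case=> // i _; rewrite /lambda /=.
exact: iter_gap_ratio (tpoly_nneg hc0 hn) (tpoly1_le1 hc0 hc1 hn) (tpoly1_lt1 hc0 hc1 hn) i.
Qed.
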